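(* Let $S^{\max}$, $L$ and $\alpha$ be as in the context. For every $P\in L$ and every $\tau\in S^{\mathrm{pf}}\setminus S^{\max}$: if $\tau e\in\alpha(P)$ for every event $e\in E$ such that $\tau e\in S^{\mathrm{pf}}$, then $\tau\in\alpha(P)$.
   Context: Let $E$ be a set of events. A trace is a finite sequence $\sigma=\sigma_0\cdots\sigma_{n-1}$ ($n\ge 0$) or an infinite sequence $\sigma_0\sigma_1\cdots$ of events; $|\sigma|$ is its length ($\infty$ if infinite) and $\mathbb{T}$ is the set of all traces (including the empty trace). Write $\sigma\preceq\sigma'$ iff $|\sigma|\le|\sigma'|$ and $\sigma_i=\sigma'_i$ for all $0\le i<|\sigma|$ (prefix order). For a finite trace $\tau$ and an event $e$, $\tau e$ is the trace obtained by appending $e$. For $P\subseteq\mathbb{T}$, $\mathrm{pf}(P)=\{\sigma'\in\mathbb{T}\mid\exists\sigma\in P.\ \sigma'\preceq\sigma\}$. Fix $S^{\max}\subseteq\mathbb{T}$ (the maximal trace semantics) and let $S^{\mathrm{pf}}=\mathrm{pf}(S^{\max})$ (valid traces). For $P\subseteq\mathbb{T}$, $\alpha(P)=\{\sigma\in\mathrm{pf}(P)\mid\forall\sigma'\in S^{\max}.\ \sigma\preceq\sigma'\Rightarrow\sigma'\in P\}$. Let $L\subseteq\wp(S^{\max})$ with $S^{\max},\emptyset\in L$ be such that $(L,\subseteq)$ is a complete lattice. *)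

From Stdlib Require Import List Arith Lia.
Import ListNotations.
Set Implicit Arguments.

Inductive trace (E : Type) : Type :=
| Fin : list E -> trace E
| Inf : (nat -> E) -> trace E.

Arguments Fin {E} _.
Arguments Inf {E} _.

(* |σ| with ∞ encoded as None *)
Definition tlen {E} (s : trace E) : option nat :=
  match s with Fin l => Some (length l) | Inf _ => None end.

Definition tnth {E} (s : trace E) (i : nat) : option E :=
  match s with Fin l => nth_error l i | Inf f => Some (f i) end.

Definition len_le {E} (s s' : trace E) : Prop :=
  match tlen s, tlen s' with
  | _, None => True
  | None, Some _ => False
  | Some n, Some m => n <= m
  end.

Definition idx_lt {E} (s : trace E) (i : nat) : Prop :=
  match tlen s with None => True | Some n => i < n end.

Definition prefix {E} (s s' : trace E) : Prop :=
  len_le s s' /\ forall i, idx_lt s i -> tnth s i = tnth s' i.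

Definition snoc {E} (t : list E) (e : E) : trace E := Fin (t ++ [e]).

Definition pf {E} (P : trace E -> Prop) : trace E -> Prop :=
  fun s' => exists s, P s /\ prefix s' s.

Definition alpha {E} (Smax P : trace E -> Prop) : trace E -> Prop :=
  fun s => pf P s /\ forall s', Smax s' -> prefix s s' -> P s'.

Definition subset {E} (A B : trace E -> Prop) : Prop := forall s, A s -> B s.

(* (L, ⊆) is a complete lattice: every subfamily of L has a least upper
   bound in L w.r.t. ⊆ (this implies existence of all greatest lower bounds). *)
Definition complete_lattice {E} (L : (trace E -> Prop) -> Prop) : Prop :=
  forall F : (trace E -> Prop) -> Prop,
    (forall X, F X -> L X) ->
    exists U, L U /\ (forall X, F X -> subset X U) /\
      (forall V, L V -> (forall X, F X -> subset X V) -> subset U V).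

(* A maximal trace extending a valid but non-maximal finite trace [tau] is
   strictly longer than [tau], so it extends some one-event extension [tau e],
   which is then itself valid.  Hence every maximal extension of [tau] is a
   maximal extension of some [tau e] in [alpha P], and so lies in [P]. *)

From Stdlib Require Import List Arith Lia.
Import ListNotations.

Lemma prefix_snoc_of_tnth {E} (tau : list E) (e : E) (s : trace E) :
  prefix (Fin tau) s -> tnth s (length tau) = Some e -> prefix (snoc tau e) s.
Proof.
  intros [_ Htau] Hs. unfold idx_lt in Htau; simpl in Htau.
  split.
  - destruct s as [l|f]; [|exact I].
    assert (length tau < length l).
    { apply nth_error_Some. simpl in Hs. now rewrite Hs. }
    unfold len_le; simpl. rewrite length_app; simpl. lia.
  - unfold idx_lt; simpl. rewrite length_app; simpl. intros i Hi.
    destruct (Nat.lt_ge_cases i (length tau)) as [Hlt|Hge].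
    + rewrite nth_error_app1 by exact Hlt. now apply Htau.
    + replace i with (length tau) by lia.
      now rewrite nth_error_app2, Nat.sub_diag by lia.
Qed.

Lemma prefix_Fin_eq_of_tnth_None {E} (tau : list E) (s : trace E) :
  prefix (Fin tau) s -> tnth s (length tau) = None -> s = Fin tau.
Proof.
  intros [Hlen Htau] Hs. unfold idx_lt in Htau; simpl in Htau.
  destruct s as [l|f]; [|discriminate].
  simpl in Hs. apply nth_error_None in Hs.
  unfold len_le in Hlen; simpl in Hlen.
  f_equal. apply nth_error_ext. intros i.
  destruct (Nat.lt_ge_cases i (length tau)) as [Hlt|Hge].
  - symmetry. now apply Htau.
  - now rewrite !(proj2 (nth_error_None _ _)) by lia.
Qed.

Lemma prefix_Fin_cases {E} {tau : list E} {s : trace E} :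
  prefix (Fin tau) s -> s = Fin tau \/ exists e, prefix (snoc tau e) s.
Proof.
  intros Hp. destruct (tnth s (length tau)) as [e|] eqn:Hs.
  - right. exists e. now apply prefix_snoc_of_tnth.
  - left. now apply prefix_Fin_eq_of_tnth_None.
Qed.

Lemma alpha_of_maximal_extensions {E} (Smax P : trace E -> Prop) (t : trace E) :
  pf Smax t -> (forall s, Smax s -> prefix t s -> P s) -> alpha Smax P t.
Proof.
  intros [s [Hs Hts]] Hext. split; [|exact Hext].
  exists s. split; [now apply Hext | exact Hts].
Qed.

Lemma maximal_extensions_of_alpha_snoc {E} {Smax P : trace E -> Prop}
    {tau : list E} :
  ~ Smax (Fin tau) ->
  (forall e, pf Smax (snoc tau e) -> alpha Smax P (snoc tau e)) ->
  forall s, Smax s -> prefix (Fin tau) s -> P s.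
Proof.
  intros Hnmax Hsnoc s Hs Hp.
  destruct (prefix_Fin_cases Hp) as [->|[e He]]; [contradiction|].
  assert (Hvalid : pf Smax (snoc tau e)) by (exists s; split; assumption).
  now apply (proj2 (Hsnoc e Hvalid)).
Qed.

Theorem lemma6 (E : Type) (Smax : trace E -> Prop)
  (L : (trace E -> Prop) -> Prop)
  (HLsub : forall P, L P -> subset P Smax)
  (HLmax : L Smax) (HLempty : L (fun _ => False))
  (HLcl : complete_lattice L)
  (P : trace E -> Prop) (HP : L P) (tau : list E)
  (Htau_pf : pf Smax (Fin tau)) (Htau_nmax : ~ Smax (Fin tau))
  (Hext : forall e : E, pf Smax (snoc tau e) -> alpha Smax P (snoc tau e)) :
  alpha Smax P (Fin tau).
Proof.
  apply alpha_of_maximal_extensions; [exact Htau_pf|].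
  exact (maximal_extensions_of_alpha_snoc Htau_nmax Hext).
Qed.
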